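(* Let $V$ be an infinite-dimensional left vector space over a field $K$. Then the Grassmann graph on $\mathcal G$ is not connected. More precisely, for $X\in\mathcal G$, the connected component of $X$ consists of those $Y\in\mathcal G$ with $\dim((X+Y)/X)=\dim((X+Y)/Y)=d$ for some integer $d\ge0$; in particular no complement of $X$ in $V$ and no $Y\in\mathcal G$ with $Y<X$ or $Y>X$ lies in this component (and such elements of $\mathcal G$ exist, e.g. every hyperplane of $X$ belongs to $\mathcal G$). Moreover, every connected component of the Grassmann graph has infinite diameter.
   Context: Fields are not necessarily commutative (division rings). $\mathcal G$ denotes the set of all subspaces $X\le V$ such that $X$ is isomorphic to $V/X$. Two elements $X,Y\in\mathcal G$ are adjacent if $\dim((X+Y)/X)=\dim((X+Y)/Y)=1$. The Grassmann graph on $\mathcal G$ has vertex set $\mathcal G$ and edges the pairs of adjacent elements. $Y<X$ denotes strict inclusion of subspaces. *)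

From HB Require Import structures.
From mathcomp Require Import all_boot all_order all_algebra.
Set Implicit Arguments. Unset Strict Implicit. Unset Printing Implicit Defensive.
Import GRing.Theory.
Local Open Scope ring_scope.

Definition division_ring (K : unitRingType) : Prop :=
  forall x : K, x != 0 -> x \is a GRing.unit.

Section Grassmann.
Variables (K : unitRingType) (V : lmodType K).

Definition subspace (X : V -> Prop) : Prop :=
  X 0 /\ forall (a : K) (u v : V), X u -> X v -> X (a *: u + v).

Definition subsp_sum (X Y : V -> Prop) : V -> Prop :=
  fun v => exists x y, X x /\ Y y /\ v = x + y.

Definition subsp_cap (X Y : V -> Prop) : V -> Prop := fun v => X v /\ Y v.

Definition linear_map (f : V -> V) : Prop :=
  forall (a : K) (u v : V), f (a *: u + v) = a *: f u + f v.

(* X is isomorphic to V/X: by the first isomorphism theorem, there is a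
   linear map V -> V with image exactly X and kernel exactly X. *)
Definition iso_to_quot (X : V -> Prop) : Prop :=
  exists f : V -> V, linear_map f /\
    (forall v, X (f v)) /\ (forall x, X x -> exists v, f v = x) /\
    (forall v, f v = 0 <-> X v).

Definition inG (X : V -> Prop) : Prop := subspace X /\ iso_to_quot X.

Definition indep_mod (X : V -> Prop) (d : nat) (y : 'I_d -> V) : Prop :=
  forall c : 'I_d -> K, X (\sum_(i < d) c i *: y i) -> forall i, c i = 0.

(* dim (S/X) = d, for X <= S: the images of some y_0..y_{d-1} in S form a
   basis of S/X *)
Definition quot_dim (S X : V -> Prop) (d : nat) : Prop :=
  exists y : 'I_d -> V, (forall i, S (y i)) /\ indep_mod X y /\
    (forall v, S v -> exists (c : 'I_d -> K) (x : V),
        X x /\ v = x + \sum_(i < d) c i *: y i).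

Definition infinite_dim : Prop :=
  forall n, exists y : 'I_n -> V, indep_mod (fun v => v = 0) y.

Definition adjacent (X Y : V -> Prop) : Prop :=
  quot_dim (subsp_sum X Y) X 1 /\ quot_dim (subsp_sum X Y) Y 1.

Fixpoint walk (n : nat) (X Y : V -> Prop) : Prop :=
  match n with
  | 0 => X = Y
  | n'.+1 => exists Z, inG Z /\ adjacent X Z /\ walk n' Z Y
  end.

Definition gconnected (X Y : V -> Prop) : Prop := exists n, walk n X Y.

Definition complement (X Y : V -> Prop) : Prop :=
  subspace Y /\ (forall v, subsp_cap X Y v <-> v = 0) /\
  (forall v, subsp_sum X Y v).

Definition strict_sub (Y X : V -> Prop) : Prop :=
  (forall v, Y v -> X v) /\ exists v, X v /\ ~ Y v.

End Grassmann.

(* For X, Y in G write d(X, Y) = d when dim (X+Y)/X = dim (X+Y)/Y = d.  Along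
   an edge this changes by at most one, so the component of X only contains
   elements at finite distance.  Conversely, if d(X, Y) = d + 1, replace a
   hyperplane H of X containing X :&: Y by H + <y> for some y in Y \ X: this
   is a neighbour of X at distance at most d from Y.  It stays in G because an
   infinite-dimensional subspace U absorbs a line, U + <w> ~ U, by shifting an
   independent sequence of U.  A complement of X is at infinite distance, a
   proper sub- or superspace would be at distance 0, and elements at every
   distance n exist, so components have infinite diameter. *)

From mathcomp Require Import all_boot all_order all_algebra.
From mathcomp Require Import boolp.
From mathcomp Require classical_sets.
Set Implicit Arguments. Unset Strict Implicit. Unset Printing Implicit Defensive.
Import GRing.Theory.
Local Open Scope ring_scope.

Section Subspaces.
Variables (K : unitRingType) (V : lmodType K).
Implicit Types (X Y Z N M A B C H : V -> Prop) (u v w : V).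

Definition zero_subsp : V -> Prop := fun v => v = 0.

Definition line w : V -> Prop := fun v => exists a, v = a *: w.

Definition adjoin N w : V -> Prop := fun v => exists a x, N x /\ v = x + a *: w.

Definition span_mod N n (z : 'I_n -> V) : V -> Prop :=
  fun v => exists (c : 'I_n -> K) x, N x /\ v = x + \sum_(i < n) c i *: z i.

Definition findim A := exists d, quot_dim A zero_subsp d.

Definition grass_dist X Y d :=
  quot_dim (subsp_sum X Y) X d /\ quot_dim (subsp_sum X Y) Y d.

Lemma subsp0 X : subspace X -> X 0.
Proof. by case. Qed.

Lemma subspD X u v : subspace X -> X u -> X v -> X (u + v).
Proof. by move=> [_ sX] Xu Xv; have := sX 1 u v Xu Xv; rewrite scale1r. Qed.

Lemma subspZ X a u : subspace X -> X u -> X (a *: u).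
Proof. by move=> [X0 sX] Xu; have := sX a u 0 Xu X0; rewrite addr0. Qed.

Lemma subspN X u : subspace X -> X u -> X (- u).
Proof. by move=> sX Xu; rewrite -scaleN1r; apply: subspZ. Qed.

Lemma subspB X u v : subspace X -> X u -> X v -> X (u - v).
Proof. by move=> sX Xu Xv; apply: subspD => //; apply: subspN. Qed.

Lemma subspDr X u v : subspace X -> X u -> X (u + v) -> X v.
Proof. by move=> sX Xu Xuv; have := subspB sX Xuv Xu; rewrite addrC addKr. Qed.

Lemma subsp_lincomb X n (c : 'I_n -> K) (z : 'I_n -> V) :
  subspace X -> (forall i, X (z i)) -> X (\sum_(i < n) c i *: z i).
Proof.
move=> sX Xz; elim/big_ind: _ => [|u v|i _]; first exact: subsp0.
  exact: subspD.
exact: subspZ.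
Qed.

Lemma zero_subspace : subspace zero_subsp.
Proof. by split=> // a u v -> ->; rewrite scaler0 addr0. Qed.

Lemma sum_subspace X Y : subspace X -> subspace Y -> subspace (subsp_sum X Y).
Proof.
move=> [X0 sX] [Y0 sY]; split; first by exists 0, 0; rewrite addr0.
move=> a _ _ [x [y [Xx [Yy ->]]]] [x' [y' [Xx' [Yy' ->]]]].
exists (a *: x + x'), (a *: y + y'); do !split; [exact: sX|exact: sY|].
by rewrite scalerDr addrACA.
Qed.

Lemma cap_subspace X Y : subspace X -> subspace Y -> subspace (subsp_cap X Y).
Proof. by move=> [X0 sX] [Y0 sY]; split=> // a u v [] ? ? [] ? ?; split; auto. Qed.

Lemma line_subspace w : subspace (line w).
Proof.
split; first by exists 0; rewrite scale0r.
by move=> a _ _ [b ->] [c ->]; exists (a * b + c); rewrite scalerDl scalerA.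
Qed.

Lemma adjoin_subspace N w : subspace N -> subspace (adjoin N w).
Proof.
move=> [N0 sN]; split; first by exists 0, 0; rewrite scale0r addr0.
move=> a _ _ [b [x [Nx ->]]] [b' [x' [Nx' ->]]].
exists (a * b + b'), (a *: x + x'); split; first exact: sN.
by rewrite scalerDr addrACA scalerDl scalerA.
Qed.

Lemma adjoin_base N w : forall v, N v -> adjoin N w v.
Proof. by move=> v Nv; exists 0, v; rewrite scale0r addr0. Qed.

Lemma adjoin_gen N w : subspace N -> adjoin N w w.
Proof. by move=> sN; exists 1, 0; rewrite scale1r add0r; split=> //; apply: subsp0. Qed.

Lemma adjoin_line N w : adjoin N w = subsp_sum N (line w).
Proof.
apply/predeqP => v; split=> [[a [x [Nx ->]]]|[x [_ [Nx [[a ->] ->]]]]].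
  by exists x, (a *: w); do !split=> //; exists a.
by exists a, x.
Qed.

Lemma span_mod_subspace N n (z : 'I_n -> V) : subspace N -> subspace (span_mod N z).
Proof.
move=> [N0 sN]; split.
  exists (fun=> 0), 0; rewrite big1 ?addr0 // => i _; exact: scale0r.
move=> a _ _ [c [x [Nx ->]]] [c' [x' [Nx' ->]]].
exists (fun i => a * c i + c' i), (a *: x + x'); split; first exact: sN.
rewrite scalerDr addrACA scaler_sumr -big_split; congr (_ + _).
by apply: eq_bigr => i _; rewrite scalerDl scalerA.
Qed.

Lemma span_mod_base N n (z : 'I_n -> V) x : N x -> span_mod N z x.
Proof.
by move=> Nx; exists (fun=> 0), x; rewrite big1 ?addr0 // => i _; rewrite scale0r.
Qed.

Lemma lincomb_delta n (z : 'I_n -> V) i :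
  \sum_(j < n) (if j == i then 1 else 0) *: z j = z i.
Proof.
rewrite (bigD1 i) //= eqxx scale1r big1 ?addr0 // => j /negbTE ->.
exact: scale0r.
Qed.

Lemma span_mod_gen N n (z : 'I_n -> V) i : subspace N -> span_mod N z (z i).
Proof.
move=> sN; exists (fun j => if j == i then 1 else 0), 0.
by rewrite add0r lincomb_delta; split=> //; apply: subsp0.
Qed.

Lemma indep_mod_notin N n (y : 'I_n -> V) i : indep_mod N y -> ~ N (y i).
Proof.
move=> Iy Nyi; have := Iy (fun j => if j == i then 1 else 0).
rewrite lincomb_delta => /(_ Nyi i); rewrite eqxx; apply/eqP; exact: oner_neq0.
Qed.

Lemma subsp_sumC X Y : subsp_sum X Y = subsp_sum Y X.
Proof.
by apply/predeqP => v; split=> -[x [y [Xx [Yy ->]]]]; exists y, x; rewrite addrC.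
Qed.

Lemma subsp_capC X Y : subsp_cap X Y = subsp_cap Y X.
Proof. by apply/predeqP => v; split=> -[]. Qed.

Lemma direct_sum_uniq A B a1 b1 a2 b2 : subspace A -> subspace B ->
  (forall v, A v -> B v -> v = 0) -> A a1 -> B b1 -> A a2 -> B b2 ->
  a1 + b1 = a2 + b2 -> a1 = a2 /\ b1 = b2.
Proof.
move=> sA sB AB0 Aa1 Bb1 Aa2 Bb2 E.
have Eab : a1 - a2 = b2 - b1.
  by apply/eqP; rewrite subr_eq addrAC [b2 + a2]addrC -E addrK.
have a12 : a1 - a2 = 0 by apply: AB0; [apply: subspB|rewrite Eab; apply: subspB].
split; first by apply/eqP; rewrite -subr_eq0 a12.
by apply/eqP; rewrite eq_sym -subr_eq0 -Eab a12.
Qed.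

End Subspaces.

Arguments indep_mod_notin {K V N n y} i.
Arguments zero_subsp {K V}.
Arguments zero_subspace {K V}.

Definition extend_fam T n (w : 'I_n -> T) (x : T) : 'I_n.+1 -> T :=
  fun i => oapp w x (unlift ord_max i).

Lemma extend_fam_max T n (w : 'I_n -> T) x : extend_fam w x ord_max = x.
Proof. by rewrite /extend_fam unlift_none. Qed.

Lemma extend_fam_lift T n (w : 'I_n -> T) x k : extend_fam w x (lift ord_max k) = w k.
Proof. by rewrite /extend_fam liftK. Qed.

Section Dimension.
Variables (K : unitRingType) (V : lmodType K).
Hypothesis divK : division_ring K.
Implicit Types (X Y Z N M A B C H S : V -> Prop) (u v w : V).

Lemma scaleKr_nz a v : a != 0 -> a^-1 *: (a *: v) = v.
Proof. by move=> a0; rewrite scalerA mulVr ?scale1r //; apply: divK. Qed.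

Lemma scaler_eq0_nz a v : v != 0 -> a *: v = 0 -> a = 0.
Proof.
move=> v0 av0; apply/eqP; apply: contraNT v0 => a0.
by rewrite -(scaleKr_nz v a0) av0 scaler0.
Qed.

Lemma lincomb_extend n (c : 'I_n -> K) a (y : 'I_n.+1 -> V) :
  \sum_(i < n.+1) extend_fam c a i *: y i =
  a *: y ord_max + \sum_(k < n) c k *: y (lift ord_max k).
Proof.
rewrite (bigD1_ord ord_max) //= extend_fam_max; congr (_ + _).
by apply: eq_bigr => k _; rewrite extend_fam_lift.
Qed.

Lemma span_mod_min N S n (z : 'I_n -> V) : subspace S ->
  (forall v, N v -> S v) -> (forall i, S (z i)) -> forall v, span_mod N z v -> S v.
Proof.
by move=> sS NS Sz _ [c [x [Nx ->]]]; apply: subspD => //; [apply: NS|apply: subsp_lincomb].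
Qed.

Lemma indep_mod_extend N n (w : 'I_n -> V) v : subspace N ->
  indep_mod N w -> ~ span_mod N w v -> indep_mod N (extend_fam w v).
Proof.
move=> sN Iw wv c; rewrite (bigD1_ord ord_max) //= extend_fam_max.
under eq_bigr do rewrite extend_fam_lift.
move=> Nc; have cmax : c ord_max = 0.
  apply: contra_notP wv => /eqP cmax0.
  exists (fun k => - (c ord_max)^-1 * c (lift ord_max k)),
         ((c ord_max)^-1 *: (c ord_max *: v + \sum_(k < n) c (lift ord_max k) *: w k)).
  split; first exact: subspZ.
  rewrite scalerDr scaleKr_nz // -addrA scaler_sumr -big_split /= big1 ?addr0 // => k _.
  by rewrite scalerA mulNr scaleNr addrN.
move: Nc; rewrite cmax scale0r add0r => /Iw c0 i.
by case: (unliftP ord_max i) => [k ->|->].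
Qed.

Lemma steinitz_exchange N n m (z : 'I_n -> V) (y : 'I_m -> V) : subspace N ->
  indep_mod N y -> (forall i, span_mod N z (y i)) -> (m <= n)%N.
Proof.
elim: n N m z y => [|n IHn] N [|m] z y sN Iy yz //.
  by have [c [x [Nx ymax]]] := yz ord_max; case: (indep_mod_notin ord_max Iy);
     rewrite ymax big_ord0 addr0.
(* Exchange step: y ord_max has a nonzero coefficient on some z j0, so z j0
   can be traded for y ord_max: the other y's are independent modulo
   N + <y ord_max> and lie in its span with the other z's. *)
rewrite ltnS; have [c [x0 [Nx0 ymax]]] := yz ord_max.
have [j0 cj0] : exists j0, c j0 != 0.
  apply: contrapT => c0; apply: (indep_mod_notin ord_max Iy).
  rewrite ymax big1 ?addr0 // => j _.
  by case: (eqVneq (c j) 0) => [->|cj]; [rewrite scale0r|case: c0; exists j].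
pose N' := adjoin N (y ord_max); pose z' k := z (lift j0 k).
have sN' : subspace N' := adjoin_subspace _ sN.
apply: (IHn N' m z' (fun k => y (lift ord_max k))) => //.
  move=> c' [a [x [Nx E]]] k; have := Iy (extend_fam c' (- a)).
  rewrite lincomb_extend E scaleNr addrC addrK.
  by move/(_ Nx (lift ord_max k)); rewrite extend_fam_lift.
move=> k; have sS : subspace (span_mod N' z') := span_mod_subspace z' sN'.
have NS v : N v -> span_mod N' z' v by move=> Nv; apply/span_mod_base/adjoin_base.
apply: (span_mod_min sS NS); last exact: yz.
move=> j; case: (unliftP j0 j) => [l ->|->]; first exact: span_mod_gen.
have -> : z j0 = (c j0)^-1 *: (y ord_max - x0 - \sum_(k < n) c (lift j0 k) *: z' k).
  by rewrite ymax (bigD1_ord j0) //= [x0 + _]addrC !addrK scaleKr_nz.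
apply: subspZ => //; apply: subspB => //.
  by apply: span_mod_base; apply: subspB => //; [exact: adjoin_gen|exact: adjoin_base].
by apply: subsp_lincomb => // l; exact: span_mod_gen.
Qed.

Lemma quot_dim_exists N A n (z : 'I_n -> V) : subspace N -> subspace A ->
  (forall v, A v -> span_mod N z v) -> exists2 d, (d <= n)%N & quot_dim A N d.
Proof.
move=> sN sA Az.
pose P d := `[< exists w : 'I_d -> V, (forall i, A (w i)) /\ indep_mod N w >].
have P0 : exists d, P d by exists 0%N; apply/asboolP; exists (fun=> 0); split=> [[]|c _ []].
have Pn d : P d -> (d <= n)%N.
  by move/asboolP=> [w [Aw Iw]]; apply: (steinitz_exchange sN Iw) => i; apply: Az.
case: (ex_maxnP P0 Pn) => d /asboolP [w [Aw Iw]] maxd.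
exists d; first by apply: Pn; apply/asboolP; exists w.
exists w; split=> //; split=> // v Av; apply: contrapT => wv.
suff /maxd : P d.+1 by rewrite ltnn.
apply/asboolP; exists (extend_fam w v); split; last exact: indep_mod_extend.
by move=> i; case: (unliftP ord_max i) => [k ->|->];
   rewrite ?extend_fam_lift ?extend_fam_max.
Qed.

Lemma quot_dim_uniq S N d d' : subspace N ->
  quot_dim S N d -> quot_dim S N d' -> d = d'.
Proof.
move=> sN [y [Sy [Iy Hy]]] [y' [Sy' [Iy' Hy']]].
apply/eqP; rewrite eqn_leq (steinitz_exchange sN Iy (fun i => Hy' _ (Sy i))).
exact: (steinitz_exchange sN Iy' (fun i => Hy _ (Sy' i))).
Qed.

Lemma quot_dim0P S N : subspace N -> quot_dim S N 0 <-> (forall v, S v -> N v).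
Proof.
move=> sN; split=> [[y [_ [_ Sy]]] v /Sy [c [x [Nx ->]]]|SN].
  by rewrite big_ord0 addr0.
exists (fun=> 0); split=> [[] //|]; split=> [c _ [] //|v Sv].
by exists (fun=> 0), v; rewrite big_ord0 addr0; split=> //; apply: SN.
Qed.

Lemma quot_dim_capr A N d : subspace A ->
  quot_dim A N d -> quot_dim A (subsp_cap A N) d.
Proof.
move=> sA [w [Aw [Iw Sw]]]; exists w; split=> //; split=> [c [_ /Iw]|v Av] //.
have [c [x [Nx E]]] := Sw v Av; exists c, x; split=> //; split=> //.
have -> : x = v - \sum_(i < d) c i *: w i by rewrite E addrK.
by apply: subspB => //; apply: subsp_lincomb.
Qed.

Lemma quot_dim_add A M N a b : subspace N -> subspace M ->
  (forall v, N v -> M v) -> (forall v, M v -> A v) ->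
  quot_dim A M a -> quot_dim M N b -> quot_dim A N (b + a).
Proof.
move=> sN sM NM MA [y [Ay [Iy Sy]]] [w [Mw [Iw Sw]]].
pose join T (f : 'I_b -> T) (g : 'I_a -> T) i :=
  match split i with inl k => f k | inr k => g k end.
have sum_join (c : 'I_b -> K) (c' : 'I_a -> K) :
    \sum_(i < b + a) join _ c c' i *: join _ w y i
    = \sum_(k < b) c k *: w k + \sum_(k < a) c' k *: y k.
  by rewrite big_split_ord /join; congr (_ + _); apply: eq_bigr => k _;
     rewrite ?(unsplitK (inl _ k)) ?(unsplitK (inr _ k)).
exists (join _ w y); split=> [i|].
  by rewrite /join; case: (split i) => k //; apply: MA.
split=> [c|v Av].
  have cE : c = join _ (fun k => c (lshift a k)) (fun k => c (rshift b k)).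
    by apply: funext => i; rewrite /join -{1}(splitK i); case: (split i).
  rewrite {1}cE sum_join => Nc.
  have c2 : forall k, c (rshift b k) = 0.
    by apply: Iy; apply: (subspDr sM _ (NM _ Nc)); apply: subsp_lincomb.
  move: Nc; rewrite [X in _ + X]big1 => [|k _]; last by rewrite c2 scale0r.
  rewrite addr0 => /Iw c1 i.
  by rewrite -(splitK i); case: (split i) => k /=; rewrite ?c1 ?c2.
have [c [m [Mm ->]]] := Sy v Av; have [c' [x [Nx ->]]] := Sw m Mm.
by exists (join _ c' c), x; rewrite sum_join addrA.
Qed.

Lemma quot_dim_second_iso X Y e : subspace X -> subspace Y ->
  quot_dim (subsp_sum X Y) Y e <-> quot_dim X (subsp_cap X Y) e.
Proof.
move=> sX sY; split=> [[w [Sw [Iw Hw]]]|[w [Xw [Iw Hw]]]]; last first.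
  exists w; split=> [i|].
    by exists (w i), 0; rewrite addr0; do !split=> //; apply: subsp0.
  split=> [c Yc|_ [x [y [Xx [Yy ->]]]]].
    by apply: Iw; split=> //; apply: subsp_lincomb.
  have [c [m [[_ Ym] ->]]] := Hw x Xx.
  by exists c, (m + y); rewrite addrAC; split=> //; apply: subspD.
(* Replace each w i by its component f i in X. *)
have [f Hf] := choice Sw.
have Xf i : X (f i) by have [y [Xf _]] := Hf i.
have Yd i : Y (w i - f i) by have [y [_ [Yy ->]]] := Hf i; rewrite addrC addKr.
have lincomb_w (c : 'I_e -> K) : \sum_(i < e) c i *: w i =
    \sum_(i < e) c i *: f i + \sum_(i < e) c i *: (w i - f i).
  by rewrite -big_split; apply: eq_bigr => i _ /=; rewrite -scalerDr addrC subrK.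
exists f; split=> //; split=> [c [_ Yc]|v Xv].
  by apply: Iw; rewrite lincomb_w; apply: subspD => //; apply: subsp_lincomb.
have [|c [y [Yy E]]] := Hw v.
  by exists v, 0; rewrite addr0; do !split=> //; apply: subsp0.
exists c, (v - \sum_(i < e) c i *: f i); rewrite subrK; split=> //; split.
  by apply: subspB => //; apply: subsp_lincomb.
rewrite E lincomb_w addrCA addrAC subrr add0r.
by apply: subspD => //; apply: subsp_lincomb.
Qed.

Lemma quot_dim_between B A M s : subspace M -> subspace A -> subspace B ->
  (forall v, M v -> A v) -> (forall v, A v -> B v) -> quot_dim B M s ->
  (exists e, quot_dim B A e) /\ (exists f, quot_dim A M f).
Proof.
move=> sM sA sB MA AB [z [_ [_ Bz]]]; split.
  have BzA v : B v -> span_mod A z v.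
    by move=> /Bz [c [x [Mx ->]]]; exists c, x; split=> //; apply: MA.
  by have [e _ BA] := quot_dim_exists sA sB BzA; exists e.
by have [f _ AM] := quot_dim_exists sM sA (fun v Av => Bz v (AB v Av)); exists f.
Qed.

Lemma grass_dist_common_sub X Y M s : subspace X -> subspace Y -> subspace M ->
  (forall v, M v -> X v) -> (forall v, M v -> Y v) ->
  quot_dim X M s -> quot_dim Y M s -> exists2 e, (e <= s)%N & grass_dist X Y e.
Proof.
move=> sX sY sM MX MY XM YM.
(* Both X and Y have codimension s - dim (X :&: Y)/M over X :&: Y. *)
have sI := cap_subspace sX sY.
have MI v : M v -> subsp_cap X Y v by move=> Mv; split; [apply: MX|apply: MY].
have [[e1 XI] [f1 IM1]] := quot_dim_between sM sI sX MI (fun v => @proj1 _ _) XM.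
have [[e2 YI] [f2 IM2]] := quot_dim_between sM sI sY MI (fun v => @proj2 _ _) YM.
have E1 := quot_dim_uniq sM (quot_dim_add sM sI MI (fun v => @proj1 _ _) XI IM1) XM.
have E2 := quot_dim_uniq sM (quot_dim_add sM sI MI (fun v => @proj2 _ _) YI IM2) YM.
have E12 : e1 = e2.
  by apply/eqP; rewrite -(eqn_add2l f1) {2}(quot_dim_uniq sM IM1 IM2) E1 E2.
exists e1; first by rewrite -E1 leq_addl.
split; last exact/quot_dim_second_iso.
by rewrite subsp_sumC; apply/quot_dim_second_iso => //; rewrite subsp_capC E12.
Qed.

Lemma quot_dim_cap_le A M N d : subspace A -> subspace N ->
  (forall v, A v -> M v) -> quot_dim M N d ->
  exists2 p, (p <= d)%N & quot_dim A (subsp_cap A N) p.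
Proof.
move=> sA sN AM [z [_ [_ Mz]]].
have [p pd AN] := quot_dim_exists sN sA (fun v Av => Mz v (AM v Av)).
by exists p; last exact: quot_dim_capr.
Qed.

Lemma grass_dist_adjacent X Z Y d : subspace X -> subspace Z -> subspace Y ->
  adjacent X Z -> grass_dist Z Y d -> exists2 e, (e <= d.+1)%N & grass_dist X Y e.
Proof.
move=> sX sZ sY [XZ_X XZ_Z] [ZY_Z ZY_Y].
(* Over M := X :&: Z :&: Y, X has codimension p + 1 and Y has codimension
   q + d, where p <= d and q <= 1; both equal the codimension of Z. *)
have sXZ := cap_subspace sX sZ; have sZX := cap_subspace sZ sX.
have sZY := cap_subspace sZ sY; have sYZ := cap_subspace sY sZ.
rewrite subsp_sumC in XZ_X; rewrite subsp_sumC in ZY_Z.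
have X_XZ := (quot_dim_second_iso _ sX sZ).1 XZ_Z.
have Z_ZX := (quot_dim_second_iso _ sZ sX).1 XZ_X.
have Z_ZY := (quot_dim_second_iso _ sZ sY).1 ZY_Y.
have Y_YZ := (quot_dim_second_iso _ sY sZ).1 ZY_Z.
pose M v := X v /\ Z v /\ Y v.
have sM : subspace M.
  split=> [|a u v [? [? ?]] [? [? ?]]]; first by do !split; apply: subsp0.
  by do !split; [case: sX => _; apply|case: sZ => _; apply|case: sY => _; apply].
have [p pd XZ_M] : exists2 p, (p <= d)%N & quot_dim (subsp_cap X Z) M p.
  have [p pd] := quot_dim_cap_le sXZ sZY (fun v => @proj2 _ _) Z_ZY.
  rewrite (_ : subsp_cap (subsp_cap X Z) (subsp_cap Z Y) = M); first by exists p.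
  by apply/predeqP; rewrite /subsp_cap /M; tauto.
have [q _ ZY_M] : exists2 q, (q <= 1)%N & quot_dim (subsp_cap Z Y) M q.
  have [q q1] := quot_dim_cap_le sZY sZX (fun v => @proj1 _ _) Z_ZX.
  rewrite (_ : subsp_cap (subsp_cap Z Y) (subsp_cap Z X) = M); first by exists q.
  by apply/predeqP; rewrite /subsp_cap /M; tauto.
have X_M : quot_dim X M (p + 1).
  by apply: (quot_dim_add sM sXZ _ (fun v => @proj1 _ _)) => // v [? [? ?]].
have Z_M : quot_dim Z M (p + 1).
  apply: (quot_dim_add sM sZX _ (fun v => @proj1 _ _) Z_ZX); first by move=> v [? [? ?]].
  by rewrite subsp_capC.
have Y_M : quot_dim Y M (q + d).
  apply: (quot_dim_add sM sYZ _ (fun v => @proj1 _ _) Y_YZ); first by move=> v [? [? ?]].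
  by rewrite subsp_capC.
have pq : (p + 1 = q + d)%N.
  apply: (quot_dim_uniq sM Z_M).
  by apply: (quot_dim_add sM sZY _ (fun v => @proj1 _ _)) => // v [? [? ?]].
rewrite -pq in Y_M.
have [e ep XY] := grass_dist_common_sub sX sY sM (fun v => @proj1 _ _)
  (fun v Mv => proj2 (proj2 Mv)) X_M Y_M.
by exists e => //; apply: (leq_trans ep); rewrite addn1.
Qed.

Lemma walk_grass_dist m X Y : subspace X -> subspace Y -> walk m X Y ->
  exists2 d, (d <= m)%N & grass_dist X Y d.
Proof.
elim: m X => [|m IHm] X sX sY /=.
  move=> <-; exists 0%N => //.
  suff XX : quot_dim (subsp_sum X X) X 0 by [].
  by apply/quot_dim0P => // _ [x [y [Xx [Yy ->]]]]; apply: subspD.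
move=> [Z [[sZ _] [XZ ZY]]].
have [d dm ZYd] := IHm Z sZ sY ZY.
have [e ed XYe] := grass_dist_adjacent sX sZ sY XZ ZYd.
by exists e => //; apply: leq_trans ed _.
Qed.

End Dimension.

Definition subset_chain T (F : (T -> Prop) -> Prop) :=
  forall S S', F S -> F S' -> (forall v, S v -> S' v) \/ (forall v, S' v -> S v).

Lemma zorn_subsets T (Q : (T -> Prop) -> Prop) (S0 : T -> Prop) (t0 : T) :
  Q S0 -> S0 t0 ->
  (forall F, (forall S, F S -> Q S) -> subset_chain F -> (exists S, F S) ->
     Q (fun v => exists S, F S /\ S v)) ->
  exists S, Q S /\ forall S', Q S' -> (forall v, S v -> S' v) -> forall v, S' v -> S v.
Proof.
move=> QS0 S0t0 Qchain.
(* Zorn_bigcup also asks for the union of the empty chain, hence the empty set in P. *)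
pose P (A : T -> Prop) := A = (fun=> False) \/ Q A.
have [F PF Fch|A [PA Amax]] := classical_sets.Zorn_bigcup (T := T) (P := P).
  have [[S [FS QS]]|noQ] := EM (exists S, F S /\ Q S); last first.
    left; apply/predeqP => v; split=> // -[S FS Sv].
    by case: (PF S FS) => [SE|QS]; [rewrite SE in Sv|case: noQ; exists S].
  right; have FQ S' : F S' -> Q S' \/ forall v, ~ S' v.
    by move=> FS'; case: (PF S' FS') => [->|]; [right => v|left].
  rewrite (_ : classical_sets.bigcup _ _ = fun v => exists S, (F S /\ Q S) /\ S v).
    apply: Qchain; [by move=> ? []|move=> ? ? [? _] [? _]; exact: Fch|by exists S].
  apply/predeqP => v; split=> [[S' FS' S'v]|[S' [[FS' _] S'v]]]; last by exists S'.
  by exists S'; do !split=> //; case: (FQ S' FS') => // /(_ v).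
case: PA => [A0|QA].
  by case: (Amax S0); [rewrite A0; split=> // /(_ t0 S0t0)|right].
exists A; split=> // S QS AS v Sv; apply: contrapT => Av.
by case: (Amax S); [split=> // /(_ v Sv)|right].
Qed.

Section Complements.
Variables (K : unitRingType) (V : lmodType K).
Hypothesis divK : division_ring K.
Implicit Types (X Y Z N M A B C H S U : V -> Prop) (u v w : V).

Lemma relative_complement_exists U S : subspace U -> subspace S ->
  (forall v, S v -> U v) ->
  exists C, [/\ subspace C, (forall v, C v -> U v), (forall v, C v -> S v -> v = 0)
              & (forall u, U u -> subsp_sum S C u)].
Proof.
move=> sU sS SU.
pose Q C := [/\ subspace C, (forall v, C v -> U v) & (forall v, C v -> S v -> v = 0)].
have [||F FQ Fch [S1 FS1]|C [[sC CU CS] Cmax]] := @zorn_subsets V Q zero_subsp 0.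
- by split=> [|v ->|v ->] //; [exact: zero_subspace|exact: subsp0].
- by [].
- split=> [|v [S2 [FS2 S2v]]|v [S2 [FS2 S2v]]]; last 2 first.
  + by have [_ h _] := FQ S2 FS2; apply: h.
  + by have [_ _ h] := FQ S2 FS2; apply: h.
  split; first by exists S1; split=> //; have [[]] := FQ S1 FS1.
  move=> a u v [S2 [FS2 S2u]] [S3 [FS3 S3v]].
  have [S4 [FS4 [S4u S4v]]] : exists S4, F S4 /\ S4 u /\ S4 v.
    by case: (Fch S2 S3 FS2 FS3) => S23; [exists S3|exists S2]; do !split; auto.
  by exists S4; split=> //; have [[_ h] _ _] := FQ S4 FS4; apply: h.
exists C; split=> // u Uu; apply: contrapT => nSCu.
have QCu : Q (adjoin C u).
  split; first exact: adjoin_subspace.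
    by move=> _ [a [c [Cc ->]]]; apply: subspD => //; [apply: CU|apply: subspZ].
  move=> _ [a [c [Cc ->]]] Sv; have [a0|an0] := eqVneq a 0.
    by move: Sv; rewrite a0 scale0r addr0 => Sc; exact: CS.
  case: nSCu; exists (a^-1 *: (c + a *: u)), (- (a^-1 *: c)); split; first exact: subspZ.
  split; first by apply: subspN => //; apply: subspZ.
  by rewrite scalerDr scaleKr_nz // addrAC subrr add0r.
have Cu := Cmax _ QCu (adjoin_base u) u (adjoin_gen _ sC).
by case: nSCu; exists 0, u; rewrite add0r; split=> //; apply: subsp0.
Qed.

Lemma complement_exists X : subspace X ->
  exists C, [/\ subspace C, (forall v, C v -> X v -> v = 0) & (forall v, subsp_sum X C v)].
Proof.
move=> sX.
have [||C [sC _ CX XC]] := relative_complement_exists (U := fun=> True) _ sX => //.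
by exists C; split=> // v; apply: XC.
Qed.

End Complements.

Section Isomorphisms.
Variables (K : unitRingType) (V : lmodType K).
Implicit Types (X Y Z N M A B C H S U : V -> Prop) (u v w : V).

(* Isomorphisms are given by their graphs, which avoids choosing values
   outside the domain. *)
Record iso_graph A B (G : V -> V -> Prop) : Prop := IsoGraph {
  iso0 : G 0 0;
  isoL : forall a u v u' v', G u v -> G u' v' -> G (a *: u + u') (a *: v + v');
  iso_dom : forall u v, G u v -> A u /\ B v;
  iso_total : forall u, A u -> exists v, G u v;
  iso_onto : forall v, B v -> exists u, G u v;
  iso_fun : forall u v v', G u v -> G u v' -> v = v';
  iso_inj : forall u u' v, G u v -> G u' v -> u = u' }.

Definition isomorphic A B := exists G, iso_graph A B G.

Lemma isomorphic_refl A : subspace A -> isomorphic A A.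
Proof.
move=> [A0 sA]; exists (fun u v => A u /\ u = v); split.
- by [].
- by move=> a u _ u' _ [Au <-] [Au' <-]; split=> //; apply: sA.
- by move=> u _ [Au <-].
- by move=> u Au; exists u.
- by move=> v Av; exists v.
- by move=> u v v' [_ <-] [_ <-].
- by move=> u u' v [_ ->] [_ ->].
Qed.

Lemma isomorphic_sym A B : isomorphic A B -> isomorphic B A.
Proof.
move=> [G [G0 GL Gdom Gtot Gonto Gfun Ginj]]; exists (fun u v => G v u).
split=> // [a u v u' v'|u v /Gdom []|u u' v|u v v'] //; [exact: GL|exact: Ginj|exact: Gfun].
Qed.

Lemma isomorphic_trans A B C : isomorphic A B -> isomorphic B C -> isomorphic A C.
Proof.
move=> [G [G0 GL Gdom Gtot Gonto Gfun Ginj]] [H [H0 HL Hdom Htot Honto Hfun Hinj]].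
exists (fun u w => exists v, G u v /\ H v w); split.
- by exists 0.
- move=> a u w u' w' [v [Guv Hvw]] [v' [Guv' Hvw']].
  by exists (a *: v + v'); split; [exact: GL|exact: HL].
- by move=> u w [v [/Gdom [Au _] /Hdom [_ Cw]]].
- move=> u /Gtot [v Guv]; have [_ /Htot [w Hvw]] := Gdom _ _ Guv.
  by exists w, v.
- move=> w /Honto [v Hvw]; have [/Gonto [u Guv] _] := Hdom _ _ Hvw.
  by exists u, v.
- move=> u w w' [v [Guv Hvw]] [v' [Guv' Hvw']].
  by rewrite (Gfun _ _ _ Guv Guv') in Hvw; exact: Hfun Hvw Hvw'.
- move=> u u' w [v [Guv Hvw]] [v' [Guv' Hvw']].
  by rewrite (Hinj _ _ _ Hvw Hvw') in Guv; exact: Ginj Guv Guv'.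
Qed.

Lemma isomorphic_direct_sum A A' B B' :
  subspace A -> subspace A' -> subspace B -> subspace B' ->
  (forall v, A v -> A' v -> v = 0) -> (forall v, B v -> B' v -> v = 0) ->
  isomorphic A B -> isomorphic A' B' -> isomorphic (subsp_sum A A') (subsp_sum B B').
Proof.
move=> sA sA' sB sB' AA' BB' [G [G0 GL Gdom Gtot Gonto Gfun Ginj]].
move=> [G' [G'0 G'L G'dom G'tot G'onto G'fun G'inj]].
exists (fun u v => exists a a' b b', [/\ G a b, G' a' b', u = a + a' & v = b + b']).
split.
- by exists 0, 0, 0, 0; rewrite addr0.
- move=> c _ _ _ _ [a [a' [b [b' [Gab Gab' -> ->]]]]] [e [e' [f [f' [Gef Gef' -> ->]]]]].
  exists (c *: a + e), (c *: a' + e'), (c *: b + f), (c *: b' + f').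
  by split; [exact: GL|exact: G'L|rewrite scalerDr addrACA..].
- move=> _ _ [a [a' [b [b' [/Gdom [Aa Bb] /G'dom [Aa' Bb'] -> ->]]]]].
  by split; [exists a, a'|exists b, b'].
- move=> _ [a [a' [/Gtot [b Gab] [/G'tot [b' Gab'] ->]]]].
  by exists (b + b'), a, a', b, b'.
- move=> _ [b [b' [/Gonto [a Gab] [/G'onto [a' Gab'] ->]]]].
  by exists (a + a'), a, a', b, b'.
- move=> _ _ _ [a [a' [b [b' [Gab Gab' -> ->]]]]] [e [e' [f [f' [Gef Gef' E ->]]]]].
  have [Aa _] := Gdom _ _ Gab; have [Aa' _] := G'dom _ _ Gab'.
  have [Ae _] := Gdom _ _ Gef; have [Ae' _] := G'dom _ _ Gef'.
  have [ae ae'] := direct_sum_uniq sA sA' AA' Aa Aa' Ae Ae' E.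
  rewrite ae in Gab; rewrite ae' in Gab'.
  by rewrite (Gfun _ _ _ Gab Gef) (G'fun _ _ _ Gab' Gef').
- move=> _ _ _ [a [a' [b [b' [Gab Gab' -> ->]]]]] [e [e' [f [f' [Gef Gef' -> E]]]]].
  have [_ Bb] := Gdom _ _ Gab; have [_ Bb'] := G'dom _ _ Gab'.
  have [_ Bf] := Gdom _ _ Gef; have [_ Bf'] := G'dom _ _ Gef'.
  have [fb fb'] := direct_sum_uniq sB sB' BB' Bb Bb' Bf Bf' E.
  rewrite fb in Gab; rewrite fb' in Gab'.
  by rewrite (Ginj _ _ _ Gab Gef) (G'inj _ _ _ Gab' Gef').
Qed.

Lemma inG_complement_iso X C : subspace C ->
  (forall v, C v -> X v -> v = 0) -> (forall v, subsp_sum X C v) ->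
  inG X -> isomorphic C X.
Proof.
move=> sC CX XC [sX [f [lf [fX [fonto fker]]]]].
have f0 : f 0 = 0 by apply/fker; apply: subsp0.
have fD u v : f (u + v) = f u + f v by rewrite -[u]scale1r lf !scale1r.
exists (fun u w => C u /\ w = f u); split.
- by split; [apply: subsp0|rewrite f0].
- by move=> a u _ u' _ [Cu ->] [Cu' ->]; rewrite lf; split=> //; case: sC => _; apply.
- by move=> u _ [Cu ->].
- by move=> u Cu; exists (f u).
- move=> x /fonto [v fv]; have [x' [c [Xx' [Cc vE]]]] := XC v.
  by exists c; rewrite -fv vE fD (proj2 (fker x') Xx') add0r.
- by move=> u v v' [_ ->] [_ ->].
- move=> u u' _ [Cu ->] [Cu' fuu']; apply/eqP; rewrite -subr_eq0; apply/eqP.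
  apply: CX; first exact: subspB.
  by apply/fker; rewrite -scaleN1r addrC lf scaleN1r fuu' addNr.
Qed.

Lemma complement_iso_inG X C : subspace X -> subspace C ->
  (forall v, C v -> X v -> v = 0) -> (forall v, subsp_sum X C v) ->
  isomorphic C X -> inG X.
Proof.
move=> sX sC CX XC [G [G0 GL Gdom Gtot Gonto Gfun Ginj]].
have XC0 v : X v -> C v -> v = 0 by move=> Xv Cv; apply: CX.
(* f (x + c) := G c for x in X and c in C: its kernel and its image are X. *)
pose R v w := exists x c, [/\ X x, C c, v = x + c & G c w].
have [f Rf] : {f & forall v, R v (f v)}.
  apply: choice => v; have [x [c [Xx [Cc E]]]] := XC v.
  by have [w Gcw] := Gtot c Cc; exists w, x, c.
have Rfun v w : R v w -> w = f v.
  move=> [x [c [Xx Cc E Gcw]]]; have [x' [c' [Xx' Cc' E' Gcw']]] := Rf v.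
  have [_ cc'] := direct_sum_uniq sX sC XC0 Xx Cc Xx' Cc' (etrans (esym E) E').
  by rewrite cc' in Gcw; exact: Gfun Gcw Gcw'.
split=> //; exists f; split=> [a u v|].
  apply/esym/Rfun; have [x [c [Xx Cc -> Gc]]] := Rf u.
  have [x' [c' [Xx' Cc' -> Gc']]] := Rf v.
  exists (a *: x + x'), (a *: c + c'); split; last exact: GL.
  - by case: sX => _; apply.
  - by case: sC => _; apply.
  - by rewrite scalerDr addrACA.
split=> [v|]; first by have [x [c [_ _ _ /Gdom []]]] := Rf v.
split=> [x /Gonto [c Gcx]|v].
  exists c; apply/esym/Rfun; exists 0, c; rewrite add0r.
  by split=> //; [apply: subsp0|have [] := Gdom _ _ Gcx].
split=> [fv0|Xv]; last first.
  by apply/esym/Rfun; exists v, 0; rewrite addr0; split=> //; apply: subsp0.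
have [x [c [Xx Cc vE Gc]]] := Rf v; rewrite fv0 in Gc.
by rewrite vE (Ginj _ _ _ Gc G0) addr0.
Qed.

Lemma inG_complement_isoP X C : subspace X -> subspace C ->
  (forall v, C v -> X v -> v = 0) -> (forall v, subsp_sum X C v) ->
  inG X <-> isomorphic C X.
Proof.
by move=> sX sC CX XC; split; [exact: inG_complement_iso|exact: complement_iso_inG].
Qed.

End Isomorphisms.

Section FiniteDimension.
Variables (K : unitRingType) (V : lmodType K).
Hypothesis divK : division_ring K.
Implicit Types (X Y Z N M A B C H S U : V -> Prop) (u v w : V).

Lemma findim_span A n (z : 'I_n -> V) : subspace A ->
  (forall v, A v -> span_mod zero_subsp z v) -> findim A.
Proof.
by move=> sA Az; have [d _ Ad] := quot_dim_exists divK zero_subspace sA Az; exists d.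
Qed.

Lemma span_zero_subspP n (z : 'I_n -> V) v :
  span_mod zero_subsp z v <-> exists c : 'I_n -> K, v = \sum_(i < n) c i *: z i.
Proof.
split=> [[c [x [-> ->]]]|[c ->]]; first by exists c; rewrite add0r.
by exists c, 0; rewrite add0r.
Qed.

Lemma findim_isomorphic A B : subspace B -> isomorphic A B -> findim A -> findim B.
Proof.
move=> sB [G [G0 GL Gdom Gtot Gonto Gfun _]] [d [y [Ay [_ Ay0]]]].
have [y' Gyy'] := choice (fun i => Gtot _ (Ay i)).
apply: (findim_span (z := y')) => // v /Gonto [u Guv]; apply/span_zero_subspP.
have [Au _] := Gdom _ _ Guv; have /span_zero_subspP [c uE] := Ay0 u Au.
have Glin : G (\sum_(i < d) c i *: y i) (\sum_(i < d) c i *: y' i).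
  by elim/big_rec2: _ => // i a b _ Gab; apply: GL.
by exists c; apply: Gfun Glin; rewrite -uE.
Qed.

Lemma findim_sum A B : subspace A -> subspace B ->
  findim A -> findim B -> findim (subsp_sum A B).
Proof.
move=> sA sB [a [y [_ [_ Ay]]]] [b [w [_ [_ Bw]]]].
pose z i := match split i with inl k => y k | inr k => w k end.
apply: (findim_span (z := z)); first exact: sum_subspace.
move=> _ [x [x' [/Ay/span_zero_subspP [c ->] [/Bw/span_zero_subspP [c' ->] ->]]]].
apply/span_zero_subspP; exists (fun i => match split i with inl k => c k | inr k => c' k end).
by rewrite big_split_ord /z; congr (_ + _); apply: eq_bigr => k _;
   rewrite ?(unsplitK (inl _ k)) ?(unsplitK (inr _ k)).
Qed.

Lemma findim_line w : findim (line w).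
Proof.
apply: (findim_span (z := fun _ : 'I_1 => w)); first exact: line_subspace.
by move=> _ [a ->]; apply/span_zero_subspP; exists (fun=> a); rewrite big_ord1.
Qed.

Lemma findim_adjoin A w : subspace A -> findim A -> findim (adjoin A w).
Proof.
move=> sA fA; rewrite adjoin_line.
by apply: findim_sum fA (findim_line w) => //; exact: line_subspace.
Qed.

Lemma not_findim_full : infinite_dim V -> ~ findim (fun _ : V => True).
Proof.
move=> infV [d [y [_ [_ Vy]]]]; have [w Iw] := infV d.+1.
by have := steinitz_exchange divK zero_subspace Iw (fun i => Vy (w i) I); rewrite ltnn.
Qed.

Lemma inG_not_findim X C : infinite_dim V -> inG X -> subspace C ->
  (forall v, C v -> X v -> v = 0) -> (forall v, subsp_sum X C v) ->
  ~ findim X /\ ~ findim C.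
Proof.
move=> infV gX sC CX XC; have CisoX := inG_complement_iso sC CX XC gX.
have XC_fin : findim X -> findim C -> False.
  move=> fX fC; apply: (not_findim_full infV).
  rewrite (_ : (fun _ : V => True) = subsp_sum X C); last exact/predeqP.
  by apply: findim_sum => //; exact: gX.1.
split=> [fX|fC]; apply: XC_fin => //.
  exact: findim_isomorphic sC (isomorphic_sym CisoX) fX.
exact: findim_isomorphic gX.1 CisoX fC.
Qed.

End FiniteDimension.

Definition seq_cons T (x : T) (s : nat -> T) : nat -> T :=
  fun i => if i is j.+1 then s j else x.

Section Absorption.
Variables (K : unitRingType) (V : lmodType K).
Hypothesis divK : division_ring K.
Implicit Types (X Y Z N M A B C H S T U : V -> Prop) (u v w : V) (e f : nat -> V).

Definition seq_indep e := forall n, indep_mod zero_subsp (fun i : 'I_n => e i).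

Definition seq_span e : V -> Prop :=
  fun v => exists n (c : nat -> K), v = \sum_(i < n) c i *: e i.

Lemma not_findim_indep_seq A : subspace A -> ~ findim A ->
  exists2 e, (forall i, A (e i)) & seq_indep e.
Proof.
move=> sA nA.
have ext (p : {n & 'I_n -> V}) : exists v, (forall i, A (projT2 p i)) ->
    A v /\ ~ span_mod zero_subsp (projT2 p) v.
  case: p => n w; apply: contrapT => /forallNP noext; case: nA.
  apply: (findim_span divK (z := w)) => // v Av; apply: contrapT => wv.
  by case: (noext v) => _ /=; split.
have [g Hg] := choice ext.
pose fix fam n : 'I_n -> V :=
  if n is m.+1 then extend_fam (fam m) (g (existT _ m (fam m))) else fun=> 0.
pose e n := fam n.+1 ord_max.
have famE n (i : 'I_n) : fam n i = e i.
  elim: n i => [[]//|n IHn] i /=; case: (unliftP ord_max i) => [k ->|->].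
    by rewrite extend_fam_lift IHn lift_max.
  by rewrite extend_fam_max /e /= extend_fam_max.
have fam_ok n : (forall i, A (fam n i)) /\ indep_mod zero_subsp (fam n).
  elim: n => [|n [Afam Ifam]]; first by split=> [[]|c _ []].
  have [Ag ng] := Hg (existT _ n (fam n)) Afam.
  split=> [i|]; last exact: indep_mod_extend zero_subspace Ifam ng.
  by case: (unliftP ord_max i) => [k ->|->] /=; rewrite ?extend_fam_lift ?extend_fam_max.
exists e => [i|n]; first by rewrite -(famE i.+1 ord_max); case: (fam_ok i.+1).
by rewrite -(funext (famE n)); case: (fam_ok n).
Qed.

Lemma not_findim_indep A n : subspace A -> ~ findim A ->
  exists w : 'I_n -> V, (forall i, A (w i)) /\ indep_mod zero_subsp w.
Proof. by move=> sA /(not_findim_indep_seq sA) [e Ae Ie]; exists (fun i => e i). Qed.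

Lemma lincomb_widen (c : nat -> K) e n m : (n <= m)%N ->
  \sum_(i < n) c i *: e i = \sum_(i < m) (if (i < n)%N then c i else 0) *: e i.
Proof.
move=> nm; rewrite (big_ord_widen _ (fun i => c i *: e i) nm) big_mkcond.
by apply: eq_bigr => i _; case: ifP; rewrite ?scale0r.
Qed.

Definition coefD a n (c : nat -> K) n' (c' : nat -> K) : nat -> K :=
  fun i => a * (if (i < n)%N then c i else 0) + (if (i < n')%N then c' i else 0).

Lemma lincomb_seqD a n n' (c c' : nat -> K) e :
  a *: \sum_(i < n) c i *: e i + \sum_(i < n') c' i *: e i =
  \sum_(i < n + n') coefD a n c n' c' i *: e i.
Proof.
rewrite (lincomb_widen _ _ (leq_addr n' n)) (lincomb_widen c' _ (leq_addl n n')).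
by rewrite scaler_sumr -big_split; apply: eq_bigr => i _ /=; rewrite scalerDl scalerA.
Qed.

Lemma seq_span_subspace e : subspace (seq_span e).
Proof.
split; first by exists 0%N, (fun=> 0); rewrite big_ord0.
by move=> a _ _ [n [c ->]] [n' [c' ->]]; exists (n + n')%N, (coefD a n c n' c');
   rewrite lincomb_seqD.
Qed.

(* Equal combinations of an independent sequence have equal coefficients,
   so they stay equal after replacing the sequence by any other one. *)
Lemma seq_indep_lincomb_eq e f n n' (c c' : nat -> K) : seq_indep e ->
  \sum_(i < n) c i *: e i = \sum_(i < n') c' i *: e i ->
  \sum_(i < n) c i *: f i = \sum_(i < n') c' i *: f i.
Proof.
move=> Ie.
rewrite !(lincomb_widen _ _ (leq_addr n' n)) !(lincomb_widen _ _ (leq_addl n n')).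
move=> /eqP; rewrite -subr_eq0 -sumrB => /eqP E.
have coefE (i : 'I_(n + n')) :
    (if (i < n)%N then c i else 0) = (if (i < n')%N then c' i else 0).
  apply/eqP; rewrite -subr_eq0; apply/eqP; move: i; apply: Ie.
  by apply: etrans E; apply: eq_bigr => i _; rewrite scalerBl.
by apply: eq_bigr => i _; rewrite coefE.
Qed.

Lemma isomorphic_seq_span e f : seq_indep e -> seq_indep f ->
  isomorphic (seq_span e) (seq_span f).
Proof.
move=> Ie If.
exists (fun u v => exists n (c : nat -> K),
  u = \sum_(i < n) c i *: e i /\ v = \sum_(i < n) c i *: f i); split.
- by exists 0%N, (fun=> 0); rewrite !big_ord0.
- move=> a _ _ _ _ [n [c [-> ->]]] [n' [c' [-> ->]]].
  by exists (n + n')%N, (coefD a n c n' c'); rewrite !lincomb_seqD.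
- by move=> _ _ [n [c [-> ->]]]; split; exists n, c.
- by move=> _ [n [c ->]]; exists (\sum_(i < n) c i *: f i), n, c.
- by move=> _ [n [c ->]]; exists (\sum_(i < n) c i *: e i), n, c.
- move=> _ _ _ [n [c [-> ->]]] [n' [c' [E ->]]]; exact: seq_indep_lincomb_eq E.
- move=> _ _ _ [n [c [-> ->]]] [n' [c' [-> E]]]; exact: seq_indep_lincomb_eq E.
Qed.

Lemma lincomb_seq_cons w e n (c : nat -> K) :
  \sum_(i < n.+1) c i *: seq_cons w e i = c 0%N *: w + \sum_(i < n) c i.+1 *: e i.
Proof. by rewrite big_ord_recl. Qed.

Lemma adjoin_seq_span w e : adjoin (seq_span e) w = seq_span (seq_cons w e).
Proof.
apply/predeqP => v; split=> [[a [_ [[n [c ->]] ->]]]|[[|n] [c ->]]].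
- by exists n.+1, (seq_cons a c); rewrite lincomb_seq_cons addrC.
- by exists 0, 0; rewrite big_ord0 scale0r addr0; split=> //; exists 0%N, c; rewrite big_ord0.
- by exists (c 0%N), (\sum_(i < n) c i.+1 *: e i); rewrite lincomb_seq_cons addrC;
     split=> //; exists n, (fun i => c i.+1).
Qed.

Lemma seq_indep_cons U w e : subspace U -> (forall i, U (e i)) -> seq_indep e ->
  (forall a, U (a *: w) -> a = 0) -> seq_indep (seq_cons w e).
Proof.
move=> sU Ue Ie Uw [|n] c; first by move=> _ [].
rewrite /zero_subsp (big_ord_recl _ (fun i => c i *: seq_cons w e i)) /=.
move=> E; have c0 : c ord0 = 0.
  apply: Uw; rewrite (_ : _ *: w = - \sum_(i < n) c (lift ord0 i) *: e i).
    by apply: subspN => //; apply: subsp_lincomb.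
  by apply/eqP; rewrite -addr_eq0 E.
move: E; rewrite c0 scale0r add0r => /(Ie n (fun i => c (lift ord0 i))) crest i.
by case: (unliftP ord0 i) => [k ->|->].
Qed.

(* Inside U pick an independent sequence e with span S. The shift w |-> e 0,
   e i |-> e (i+1) identifies S + <w> with S, and the identity on a complement
   of S in U extends this to U + <w> ~ U. *)
Lemma adjoin_isomorphic U w : subspace U -> ~ findim U ->
  (forall a, U (a *: w) -> a = 0) -> isomorphic (adjoin U w) U.
Proof.
move=> sU nU Uw.
have [e Ue Ie] := not_findim_indep_seq sU nU.
pose S := seq_span e; have sS : subspace S := seq_span_subspace e.
have SU v : S v -> U v by move=> [n [c ->]]; apply: subsp_lincomb.
have [T [sT TU TS UST]] := relative_complement_exists divK sU sS SU.
have sSw : subspace (adjoin S w) := adjoin_subspace w sS.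
have Uww : U = subsp_sum T S.
  apply/predeqP => u; split; first by move/UST; rewrite subsp_sumC.
  by move=> [t [s [Tt [Ss ->]]]]; apply: subspD => //; [apply: TU|apply: SU].
have Uw_sum : adjoin U w = subsp_sum T (adjoin S w).
  rewrite Uww; apply/predeqP => v; split.
    move=> [a [_ [[t [s [Tt [Ss ->]]]] ->]]].
    by exists t, (s + a *: w); rewrite addrA; do !split=> //; exists a, s.
  by move=> [t [_ [Tt [[a [s [Ss ->]]] ->]]]]; exists a, (t + s); rewrite addrA;
     split=> //; exists t, s.
have TSw v : T v -> adjoin S w v -> v = 0.
  move=> Tv [a [s [Ss vE]]].
  have a0 : a = 0.
    apply: Uw; have -> : a *: w = v - s by rewrite vE addrC addKr.
    by apply: subspB => //; [apply: TU|apply: SU].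
  by apply: TS => //; rewrite vE a0 scale0r addr0.
rewrite Uw_sum [in X in isomorphic _ X]Uww; apply: isomorphic_direct_sum => //.
  exact: isomorphic_refl.
rewrite adjoin_seq_span; apply: isomorphic_seq_span => //.
exact: seq_indep_cons sU Ue Ie Uw.
Qed.

End Absorption.

Section GrassmannClass.
Variables (K : unitRingType) (V : lmodType K).
Hypothesis divK : division_ring K.
Hypothesis infV : infinite_dim V.
Implicit Types (X Y Z N M A B C D H I S T U : V -> Prop) (u v w y : V).

Lemma indep_adjoin_neq0 H y : subspace H -> (forall a, H (a *: y) -> a = 0) -> y != 0.
Proof.
move=> sH Hy; apply/eqP => y0; have := Hy 1; rewrite y0 scaler0 => /(_ (subsp0 sH)).
by move/eqP; rewrite oner_eq0.
Qed.

Lemma quot_dim1P A H : subspace A -> subspace H -> (forall v, H v -> A v) ->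
  quot_dim A H 1 <-> exists2 y, A = adjoin H y & forall a, H (a *: y) -> a = 0.
Proof.
move=> sA sH HA; split=> [[y [Ay [Iy Sy]]]|[y -> Hy]].
  exists (y ord0) => [|a Ha]; last by have := Iy (fun=> a); rewrite big_ord1 => /(_ Ha ord0).
  apply/predeqP => v; split=> [/Sy [c [x [Hx ->]]]|[a [x [Hx ->]]]].
    by exists (c ord0), x; rewrite big_ord1.
  by apply: subspD => //; [apply: HA|apply: subspZ].
exists (fun=> y); split=> [_|]; first exact: adjoin_gen.
split=> [c|_ [a [x [Hx ->]]]]; last by exists (fun=> a), x; rewrite big_ord1.
by rewrite big_ord1 => /Hy c0 i; rewrite (ord1 i).
Qed.

Lemma adjoin_complement H D y : subspace H -> subspace D ->
  (forall a, H (a *: y) -> a = 0) ->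
  (forall v, D v -> adjoin H y v -> v = 0) -> (forall v, subsp_sum (adjoin H y) D v) ->
  (forall v, adjoin D y v -> H v -> v = 0) /\ (forall v, subsp_sum H (adjoin D y) v).
Proof.
move=> sH sD Hy DX XD; split=> [_ [a [d [Dd ->]]] Hv|v].
  have d0 : d = 0.
    apply: DX => //; exists (- a), (d + a *: y); rewrite scaleNr addrK; split=> //.
  by move: Hv; rewrite d0 add0r => /Hy ->; rewrite scale0r.
have [_ [d [[a [h [Hh ->]]] [Dd ->]]]] := XD v.
by exists h, (d + a *: y); rewrite addrAC addrA; split=> //; split=> //; exists a, d.
Qed.

Lemma inG_adjoin H y : subspace H -> (forall a, H (a *: y) -> a = 0) ->
  inG H <-> inG (adjoin H y).
Proof.
move=> sH Hy; have sX : subspace (adjoin H y) := adjoin_subspace y sH.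
(* For a complement D of H + <y>, D + <y> is a complement of H; and as
   infinite-dimensional spaces absorb a line, D + <y> ~ D and H + <y> ~ H. *)
have [D [sD DX XD]] := complement_exists divK sX.
have [CH HC] := adjoin_complement sH sD Hy DX XD.
have sC : subspace (adjoin D y) := adjoin_subspace y sD.
have Dy a : D (a *: y) -> a = 0.
  move=> Dy; apply: (scaler_eq0_nz divK (indep_adjoin_neq0 sH Hy)); apply: DX => //.
  by exists a, 0; rewrite add0r; split=> //; apply: subsp0.
have isoP : ~ findim H -> ~ findim D ->
    isomorphic (adjoin D y) H <-> isomorphic D (adjoin H y).
  move=> nH nD; have CD := adjoin_isomorphic divK sD nD Dy.
  have XH := adjoin_isomorphic divK sH nH Hy.
  split=> [CH'|DX'].
    exact: isomorphic_trans (isomorphic_sym CD) (isomorphic_trans CH' (isomorphic_sym XH)).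
  exact: isomorphic_trans CD (isomorphic_trans DX' XH).
have GHP := inG_complement_isoP sH sC CH HC.
have GXP := inG_complement_isoP sX sD DX XD.
split=> [GH|GX].
  have [nH nC] := inG_not_findim divK infV GH sC CH HC.
  have nD : ~ findim D by move/(findim_adjoin divK y sD).
  by apply/GXP/isoP => //; apply/GHP.
have [nX nD] := inG_not_findim divK infV GX sD DX XD.
have nH : ~ findim H by move/(findim_adjoin divK y sH).
by apply/GHP/isoP => //; apply/GXP.
Qed.

Lemma quot_dim_hyperplane A N d : subspace A -> subspace N -> (forall v, N v -> A v) ->
  quot_dim A N d.+1 -> exists H, [/\ subspace H, (forall v, N v -> H v),
    (forall v, H v -> A v), quot_dim A H 1 & quot_dim H N d].
Proof.
move=> sA sN NA [x [Ax [Ix Sx]]]; pose x' k := x (lift ord_max k).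
have sH : subspace (span_mod N x') := span_mod_subspace x' sN.
exists (span_mod N x'); split=> //.
- by move=> v; apply: span_mod_base.
- by apply: span_mod_min => // k; exact: Ax.
- apply/quot_dim1P => //; first by apply: span_mod_min => // k; exact: Ax.
  exists (x ord_max) => [|a [c [n [Nn E]]]].
    apply/predeqP => v; split=> [/Sx [c [n [Nn ->]]]|[a [_ [[c [n [Nn ->]]] ->]]]].
      exists (c ord_max), (n + \sum_(k < d) c (lift ord_max k) *: x' k).
      by rewrite (bigD1_ord ord_max) //= addrCA addrC; split=> //;
         exists (fun k => c (lift ord_max k)), n.
    apply: subspD => //; last exact: subspZ.
    by apply: subspD => //; [exact: NA|apply: subsp_lincomb => // k; exact: Ax].
  have := Ix (extend_fam (fun k => - c k) a); rewrite lincomb_extend.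
  rewrite E addrC (eq_bigr (fun k => - (c k *: x' k))) => [|k _]; last by rewrite scaleNr.
  by rewrite sumrN addrCA addNr addr0 => /(_ Nn ord_max); rewrite extend_fam_max.
exists x'; split=> [k|]; first exact: span_mod_gen.
split=> [c Nc k|v [c [n [Nn ->]]]]; last by exists c, n.
have := Ix (extend_fam c 0); rewrite lincomb_extend scale0r add0r.
by move/(_ Nc (lift ord_max k)); rewrite extend_fam_lift.
Qed.

Lemma inG_quot_dim M A d : subspace M -> subspace A -> (forall v, M v -> A v) ->
  quot_dim A M d -> inG M <-> inG A.
Proof.
elim: d A => [|d IHd] A sM sA MA AM.
  have AM0 : forall v, A v -> M v by apply/quot_dim0P.
  suff -> : A = M by [].
  by apply/predeqP => v; split=> [/AM0|/MA].
have [H [sH MH HA AH HM]] := quot_dim_hyperplane sA sM MA AM.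
have [y -> Hy] := (quot_dim1P sA sH HA).1 AH.
by rewrite (IHd H sM sH MH HM); exact: inG_adjoin.
Qed.

End GrassmannClass.

Section Existence.
Variables (K : unitRingType) (V : lmodType K).
Hypothesis divK : division_ring K.
Hypothesis infV : infinite_dim V.
Implicit Types (X Y Z N M A B C D H : V -> Prop) (u v w r : V) (G : V * V -> Prop).

Definition disjoint_iso G :=
  [/\ G (0, 0), (forall a p q, G p -> G q -> G (a *: p.1 + q.1, a *: p.2 + q.2)),
      (forall u v v', G (u, v) -> G (u, v') -> v = v'),
      (forall u u' v, G (u, v) -> G (u', v) -> u = u')
    & (forall u v u' v', G (u, v) -> G (u', v') -> u = v' -> u = 0)].

Definition graph_dom G : V -> Prop := fun u => exists v, G (u, v).
Definition graph_ran G : V -> Prop := fun v => exists u, G (u, v).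

Definition indep2_mod N u w := forall a b, N (a *: u + b *: w) -> a = 0 /\ b = 0.

Lemma disjoint_iso_chain (F : (V * V -> Prop) -> Prop) :
  (forall G, F G -> disjoint_iso G) -> subset_chain F -> (exists G, F G) ->
  disjoint_iso (fun p => exists G, F G /\ G p).
Proof.
move=> FQ Fch [G1 FG1].
have both p q : (exists G, F G /\ G p) -> (exists G, F G /\ G q) ->
    exists G, [/\ F G, G p & G q].
  move=> [S1 [F1 S1p]] [S2 [F2 S2q]].
  by case: (Fch S1 S2 F1 F2) => S12; [exists S2|exists S1]; split; auto.
split.
- by exists G1; split=> //; have [] := FQ G1 FG1.
- move=> a p q Gp Gq; have [G [FG Gp' Gq']] := both _ _ Gp Gq.
  by exists G; split=> //; have [_ GL _ _ _] := FQ G FG; apply: GL.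
- move=> u v v' Gp Gq; have [G [FG Gp' Gq']] := both _ _ Gp Gq.
  by have [_ _ Gfun _ _] := FQ G FG; apply: Gfun Gp' Gq'.
- move=> u u' v Gp Gq; have [G [FG Gp' Gq']] := both _ _ Gp Gq.
  by have [_ _ _ Ginj _] := FQ G FG; apply: Ginj Gp' Gq'.
- move=> u v u' v' Gp Gq; have [G [FG Gp' Gq']] := both _ _ Gp Gq.
  by have [_ _ _ _ Gdisj] := FQ G FG; apply: Gdisj Gp' Gq'.
Qed.

Lemma graph_dom_subspace G : disjoint_iso G -> subspace (graph_dom G).
Proof.
move=> [G0 GL _ _ _]; split=> [|a u u' [v Guv] [v' Guv']]; first by exists 0.
by exists (a *: v + v'); exact: (GL a _ _ Guv Guv').
Qed.

Lemma graph_ran_subspace G : disjoint_iso G -> subspace (graph_ran G).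
Proof.
move=> [G0 GL _ _ _]; split=> [|a v v' [u Guv] [u' Guv']]; first by exists 0.
by exists (a *: u + u'); exact: (GL a _ _ Guv Guv').
Qed.

Lemma disjoint_iso_extend G u w : disjoint_iso G ->
  indep2_mod (subsp_sum (graph_dom G) (graph_ran G)) u w ->
  disjoint_iso (fun p => exists a x y, G (x, y) /\ p = (x + a *: u, y + a *: w)).
Proof.
move=> isoG uw; have [G0 GL Gfun Ginj Gdisj] := isoG.
have sA := graph_dom_subspace isoG; have sB := graph_ran_subspace isoG.
have swap (x p x' p' : V) : x + p = x' + p' -> p - p' = x' - x.
  by move=> E; apply/eqP; rewrite subr_eq addrAC -E addrC addKr.
split.
- by exists 0, 0, 0; rewrite !scale0r !addr0.
- move=> b _ _ [a [x [y [Gxy ->]]]] [a' [x' [y' [Gxy' ->]]]] /=.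
  exists (b * a + a'), (b *: x + x'), (b *: y + y').
  split; first exact: (GL b _ _ Gxy Gxy').
  by congr (_, _); rewrite scalerDr scalerDl scalerA addrACA.
- move=> _ _ _ [a [x [y [Gxy [-> ->]]]]] [a' [x' [y' [Gxy' [E ->]]]]].
  have [aa' _] : a - a' = 0 /\ (0 : K) = 0.
    apply: (uw (a - a') 0); exists (x' - x), 0.
    rewrite scale0r !addr0 scalerBl (swap _ _ _ _ E).
    by split; [apply: subspB => //; [exists y'|exists y]|split=> //; apply: subsp0].
  move/eqP: aa'; rewrite subr_eq0 => /eqP aa'; rewrite -aa' in E *.
  by move/addIr: E => xx'; rewrite xx' in Gxy; rewrite (Gfun _ _ _ Gxy Gxy').
- move=> _ _ _ [a [x [y [Gxy [-> ->]]]]] [a' [x' [y' [Gxy' [-> E]]]]].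
  have [_ aa'] : (0 : K) = 0 /\ a - a' = 0.
    apply: (uw 0 (a - a')); exists 0, (y' - y).
    rewrite scale0r !add0r scalerBl (swap _ _ _ _ E).
    by split; [apply: subsp0|split=> //; apply: subspB => //; [exists x'|exists x]].
  move/eqP: aa'; rewrite subr_eq0 => /eqP aa'; rewrite -aa' in E *.
  by move/addIr: E => yy'; rewrite yy' in Gxy; rewrite (Ginj _ _ _ Gxy Gxy').
- move=> _ _ _ _ [a [x [y [Gxy [-> _]]]]] [a' [x' [y' [Gxy' [_ ->]]]]] E.
  have [a0 a'0] : a = 0 /\ - a' = 0.
    apply: (uw a (- a')); exists (- x), y'; rewrite scaleNr [- x + _]addrC (swap _ _ _ _ E).
    by split; [apply: subspN => //; exists y|split=> //; exists x'].
  move/eqP: a'0; rewrite oppr_eq0 => /eqP a'0.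
  move: E; rewrite a0 a'0 !scale0r !addr0 => E; rewrite E in Gxy *.
  exact: Gdisj Gxy Gxy' (erefl _).
Qed.

Lemma exists_maximal_disjoint_iso : exists2 G, disjoint_iso G &
  forall u w, ~ indep2_mod (subsp_sum (graph_dom G) (graph_ran G)) u w.
Proof.
have [||F FQ Fch FG|G [isoG Gmax]] :=
  @zorn_subsets (V * V) disjoint_iso (fun p => p = (0, 0)) (0, 0).
- split=> //; first by move=> a p q -> ->; rewrite /= scaler0 addr0.
  + by move=> u v v' [_ ->] [_ ->].
  + by move=> u u' v [-> _] [-> _].
  + by move=> u v u' v' [-> _].
- by [].
- exact: disjoint_iso_chain.
exists G => // u w uw.
have GG' p : G p -> exists a x y, G (x, y) /\ p = (x + a *: u, y + a *: w).
  by case: p => x y Gxy; exists 0, x, y; rewrite !scale0r !addr0.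
have G'uw : exists a x y, G (x, y) /\ (u, w) = (x + a *: u, y + a *: w).
  by exists 1, 0, 0; rewrite !scale1r !add0r; split=> //; case: isoG.
have Guw : G (u, w) := Gmax _ (disjoint_iso_extend isoG uw) GG' _ G'uw.
have [|/eqP] := uw 1 0; last by rewrite oner_eq0.
have [G0 _ _ _ _] := isoG; exists u, 0; rewrite scale1r scale0r !addr0.
by split; [exists w|split=> //; exists 0].
Qed.

Lemma sum_line_full N r : subspace N -> (forall u w, ~ indep2_mod N u w) -> ~ N r ->
  forall v, subsp_sum N (line r) v.
Proof.
move=> sN N2 Nr v; apply: contrapT => Nrv; apply: (N2 r v) => a b Nab.
have b0 : b = 0.
  apply: contra_notP Nrv => /eqP b0; rewrite -(scaleKr_nz divK v b0).
  exists (b^-1 *: (a *: r + b *: v)), (- (b^-1 * a) *: r).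
  split; [exact: subspZ|split; first by exists (- (b^-1 * a))].
  by rewrite scalerDr !scalerA scaleNr addrAC subrr add0r.
split=> //; move: Nab; rewrite b0 scale0r addr0 => Nar.
by apply: contra_notP Nr => /eqP a0; rewrite -(scaleKr_nz divK r a0); apply: subspZ.
Qed.

(* Either A + B = V, or V = (A + <r>) + B with B ~ A ~ A + <r>. *)
Lemma exists_inG_of_iso A B : subspace A -> subspace B ->
  (forall v, B v -> A v -> v = 0) -> isomorphic A B ->
  (forall u w, ~ indep2_mod (subsp_sum A B) u w) -> exists X, inG X.
Proof.
move=> sA sB BA isoAB AB2; have sAB := sum_subspace sA sB.
have [ABfull|/existsNP [r ABr]] := EM (forall v, subsp_sum A B v).
  by exists A; apply/(inG_complement_isoP sA sB BA ABfull); exact: isomorphic_sym.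
have ABr_full := sum_line_full sAB AB2 ABr.
have rA a : A (a *: r) -> a = 0.
  move=> Aar; apply: contra_notP ABr => /eqP a0.
  rewrite -(scaleKr_nz divK r a0); apply: subspZ => //.
  by exists (a *: r), 0; rewrite addr0; split=> //; split=> //; apply: subsp0.
have nA : ~ findim A.
  move=> fA; apply: (not_findim_full divK infV).
  rewrite (_ : (fun _ : V => True) = subsp_sum (subsp_sum A B) (line r)); last first.
    by apply/predeqP.
  apply: findim_sum => //; [exact: line_subspace| |exact: findim_line].
  by apply: findim_sum => //; exact: findim_isomorphic isoAB fA.
exists (adjoin A r); have sX := adjoin_subspace r sA.
have BX v : B v -> adjoin A r v -> v = 0.
  move=> Bv [a [x [Ax vE]]].
  have a0 : a = 0.
    apply: contra_notP ABr => /eqP a0; rewrite -(scaleKr_nz divK r a0).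
    apply: subspZ => //; exists (- x), v; split; first exact: subspN sA Ax.
    by split=> //; rewrite vE addKr.
  by apply: BA => //; move: Ax; rewrite vE a0 scale0r addr0.
have XB v : subsp_sum (adjoin A r) B v.
  have [_ [_ [[x [y [Ax [By ->]]]] [[c ->] ->]]]] := ABr_full v.
  by exists (x + c *: r), y; rewrite addrAC; split=> //; exists c, x.
apply/(inG_complement_isoP sX sB BX XB); apply: isomorphic_trans (isomorphic_sym isoAB) _.
exact: isomorphic_sym (adjoin_isomorphic divK sA nA rA).
Qed.

Lemma exists_inG : exists X, inG X.
Proof.
have [G isoG Gmax] := exists_maximal_disjoint_iso.
have [G0 GL Gfun Ginj Gdisj] := isoG.
apply: (exists_inG_of_iso (graph_dom_subspace isoG) (graph_ran_subspace isoG) _ _ Gmax).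
  by move=> v [u Guv] [w Gvw]; apply: Gdisj Gvw Guv _.
exists (fun u v => G (u, v)); split=> // [a u v u' v'|u v Guv].
  exact: (GL a (u, v) (u', v')).
by split; [exists v|exists u].
Qed.

End Existence.

Section Components.
Variables (K : unitRingType) (V : lmodType K).
Hypothesis divK : division_ring K.
Hypothesis infV : infinite_dim V.
Implicit Types (X Y Z N M A B C D H I T : V -> Prop) (u v w y : V).

Lemma notin_indep X H y : subspace X -> (forall v, H v -> X v) -> ~ X y ->
  forall a, H (a *: y) -> a = 0.
Proof.
move=> sX HX Xy a /HX Xay; apply: contra_notP Xy => /eqP a0.
by rewrite -(scaleKr_nz divK y a0); apply: subspZ.
Qed.

Lemma grass_distC X Y d : grass_dist X Y d -> grass_dist Y X d.
Proof. by rewrite /grass_dist subsp_sumC => -[]. Qed.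

Lemma grass_dist0 X Y : subspace X -> subspace Y -> grass_dist X Y 0 -> X = Y.
Proof.
move=> sX sY [XY_X XY_Y].
have YX := (quot_dim0P _ sX).1 XY_X; have XY := (quot_dim0P _ sY).1 XY_Y.
apply/predeqP => v; split=> [Xv|Yv]; [apply: XY|apply: YX].
  by exists v, 0; rewrite addr0; split=> //; split=> //; apply: subsp0.
by exists 0, v; rewrite add0r; split; [apply: subsp0|].
Qed.

Lemma grass_dist_sub X Y d : subspace X -> subspace Y -> (forall v, Y v -> X v) ->
  grass_dist X Y d -> X = Y.
Proof.
move=> sX sY YX [XY_X XY_Y]; apply: grass_dist0 => //.
have XY_X0 : quot_dim (subsp_sum X Y) X 0.
  by apply/quot_dim0P => // _ [x [y [Xx [Yy ->]]]]; apply: subspD => //; apply: YX.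
by rewrite /grass_dist -(quot_dim_uniq divK sX XY_X XY_X0).
Qed.

Lemma adjacent_adjoin X H y : subspace X -> subspace H -> (forall v, H v -> X v) ->
  quot_dim X H 1 -> ~ X y -> adjacent X (adjoin H y).
Proof.
move=> sX sH HX XH Xy; have Hy := notin_indep sX HX Xy.
have sZ := adjoin_subspace y sH.
have ZH : quot_dim (adjoin H y) H 1.
  by apply/quot_dim1P => //; [exact: adjoin_base|exists y].
have [[|[|e]] // _ [XZ0 _]] := grass_dist_common_sub divK sX sZ sH HX (adjoin_base y) XH ZH.
case: Xy; apply: ((quot_dim0P _ sX).1 XZ0).
by exists 0, y; rewrite add0r; split; [apply: subsp0|split=> //; exact: adjoin_gen].
Qed.

(* dim Z/I = d + 1 = dim (Z :&: Y)/I + dim Z/(Z :&: Y), and y lies in Z :&: Y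
   but not in I. *)
Lemma grass_dist_adjoin_lt I H Y y d : subspace I -> subspace H -> subspace Y ->
  (forall v, I v -> H v) -> (forall v, I v -> Y v) ->
  quot_dim H I d -> quot_dim Y I d.+1 -> Y y -> ~ H y ->
  exists2 e, (e <= d)%N & grass_dist (adjoin H y) Y e.
Proof.
move=> sI sH sY IH IY H_I Y_I Yy Hy.
pose Z := adjoin H y; have sZ : subspace Z := adjoin_subspace y sH.
have HZ : forall v, H v -> Z v := adjoin_base y.
have Z_H : quot_dim Z H 1.
  by apply/quot_dim1P => //; exists y => //; exact: notin_indep Hy.
have Z_I : quot_dim Z I d.+1 by rewrite -addn1; apply: quot_dim_add sI sH IH HZ Z_H H_I.
have IZ v : I v -> Z v by move/IH/HZ.
have [e _ [ZY_Z ZY_Y]] := grass_dist_common_sub divK sZ sY sI IZ IY Z_I Y_I.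
have Z_ZY := (quot_dim_second_iso _ sZ sY).1 ZY_Y.
have sZY := cap_subspace sZ sY.
have IZY v : I v -> subsp_cap Z Y v by move=> Iv; split; [apply: IZ|apply: IY].
have [_ [f ZY_I]] := quot_dim_between divK sI sZY sZ IZY (fun v => @proj1 _ _) Z_I.
have fe : (f + e = d.+1)%N.
  apply: (quot_dim_uniq divK sI _ Z_I).
  exact: (quot_dim_add sI sZY IZY (fun v => @proj1 _ _) Z_ZY ZY_I).
have f0 : f != 0%N.
  apply/eqP => f0; rewrite f0 in ZY_I; apply: Hy; apply: IH.
  by apply: ((quot_dim0P _ sI).1 ZY_I); split; [exact: (adjoin_gen y sH)|].
exists e; last by split.
by rewrite -ltnS -fe -{1}[e]add0n ltn_add2r lt0n.
Qed.

Lemma grass_dist_step X Y d : inG X -> inG Y -> grass_dist X Y d.+1 ->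
  exists2 Z, inG Z /\ adjacent X Z & exists2 e, (e <= d)%N & grass_dist Z Y e.
Proof.
move=> gX gY [XY_X XY_Y]; have [sX _] := gX; have [sY _] := gY.
pose I := subsp_cap X Y; have sI : subspace I := cap_subspace sX sY.
have IX v : I v -> X v by case.
have IY v : I v -> Y v by case.
have X_I : quot_dim X I d.+1 := (quot_dim_second_iso _ sX sY).1 XY_Y.
have Y_I : quot_dim Y I d.+1.
  by rewrite /I subsp_capC; apply/(quot_dim_second_iso _ sY sX); rewrite subsp_sumC.
(* Z := H + <y> for a hyperplane H of X containing I and some y in Y \ X. *)
have [H [sH IH HX X_H H_I]] := quot_dim_hyperplane sX sI IX X_I.
have [yb [Yyb [Iyb _]]] := Y_I; pose y := yb ord0.
have Xy : ~ X y by move=> Xy; apply: (indep_mod_notin ord0 Iyb); split=> //; apply: Yyb.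
exists (adjoin H y).
  split; last exact: adjacent_adjoin.
  apply/(inG_adjoin divK infV sH (notin_indep sX HX Xy)).
  exact/(inG_quot_dim divK infV sH sX HX X_H).
by apply: grass_dist_adjoin_lt sI sH sY IH IY H_I Y_I (Yyb _) _ => /HX.
Qed.

Lemma grass_dist_gconnected d X Y : inG X -> inG Y -> grass_dist X Y d -> gconnected X Y.
Proof.
elim/ltn_ind: d X => -[|d] IHd X gX gY XYd.
  by exists 0%N; apply: grass_dist0 gX.1 gY.1 XYd.
have [Z [gZ XZ] [e ed ZYe]] := grass_dist_step gX gY XYd.
by have [n ZYn] := IHd e ed Z gZ gY ZYe; exists n.+1, Z.
Qed.

Lemma gconnectedP X Y : inG X -> inG Y ->
  gconnected X Y <-> exists d, grass_dist X Y d.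
Proof.
move=> gX gY; split=> [[n /(walk_grass_dist divK gX.1 gY.1)] [d _ XYd]|[d]].
  by exists d.
exact: grass_dist_gconnected.
Qed.

Lemma complement_not_gconnected X Y : inG X -> complement X Y -> ~ gconnected X Y.
Proof.
move=> gX [sY [capXY XY]] [n XYn]; have sX := gX.1.
have YX v : Y v -> X v -> v = 0 by move=> Yv Xv; apply/capXY.
have [d _ [[z [_ [_ Xz]]] _]] := walk_grass_dist divK sX sY XYn.
have [_ nY] := inG_not_findim divK infV gX sY YX XY.
have [w [Yw Iw]] := not_findim_indep divK d.+1 sY nY.
have IwX : indep_mod X w.
  by move=> c Xc; apply: Iw; apply: YX Xc; apply: subsp_lincomb.
by have := steinitz_exchange divK sX IwX (fun i => Xz (w i) (XY (w i))); rewrite ltnn.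
Qed.

Lemma strict_sub_not_gconnected X Y : inG X -> inG Y ->
  strict_sub Y X \/ strict_sub X Y -> ~ gconnected X Y.
Proof.
move=> gX gY YX /(gconnectedP gX gY) [d XYd].
case: YX => [[YX [v [Xv Yv]]]|[XY [v [Yv Xv]]]].
  by apply: Yv; rewrite -(grass_dist_sub gX.1 gY.1 YX XYd).
by apply: Xv; rewrite -(grass_dist_sub gY.1 gX.1 XY (grass_distC XYd)).
Qed.

Lemma exists_not_gconnected : exists X Y, inG X /\ inG Y /\ ~ gconnected X Y.
Proof.
have [X gX] := exists_inG divK infV; have sX := gX.1.
have [C [sC CX XC]] := complement_exists divK sX.
have XC0 v : X v -> C v -> v = 0 by move=> Xv Cv; apply: CX.
have CX_full v : subsp_sum C X v by rewrite subsp_sumC.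
have gC : inG C.
  apply/(inG_complement_isoP sC sX XC0 CX_full).
  exact/isomorphic_sym/(inG_complement_isoP sX sC CX XC).
exists X, C; split=> //; split=> //; apply: complement_not_gconnected gX _.
split=> //; split=> // v; split=> [[Xv Cv]|->]; first exact: CX.
by split; apply: subsp0.
Qed.

Lemma exists_grass_dist X n : inG X -> exists2 Y, inG Y & grass_dist X Y n.
Proof.
move=> gX; have sX := gX.1.
have [C [sC CX XC]] := complement_exists divK sX.
have [nX nC] := inG_not_findim divK infV gX sC CX XC.
have [x [Xx Ix]] := not_findim_indep divK n sX nX.
have sS := span_mod_subspace x (@zero_subspace K V).
have SX : forall v, span_mod zero_subsp x v -> X v.
  by apply: span_mod_min => // v ->; apply: subsp0.
have [T [sT TX TS XST]] := relative_complement_exists divK sX sS SX.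
have X_T : quot_dim X T n.
  exists x; split=> //; split=> [c Tc|v /XST [_ [t [[c [_ [-> ->]]] [Tt ->]]]]].
    by apply: Ix; apply: TS => //; apply/span_zero_subspP; exists c.
  by exists c, t; rewrite add0r addrC.
have [y [Cy Iy]] := not_findim_indep divK n sC nC.
have IyX : indep_mod X y.
  by move=> c Xc; apply: Iy; apply: CX Xc; apply: subsp_lincomb.
pose Y := span_mod T y; have sY : subspace Y := span_mod_subspace y sT.
have TY : forall v, T v -> Y v := span_mod_base y.
have Y_T : quot_dim Y T n.
  exists y; split=> [i|]; first exact: span_mod_gen.
  by split=> [c /TX /IyX //|v [c [t [Tt ->]]]]; exists c, t.
have gY : inG Y.
  by apply/(inG_quot_dim divK infV sT sY TY Y_T)/(inG_quot_dim divK infV sT sX TX X_T).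
have [e _ XYe] := grass_dist_common_sub divK sX sY sT TX TY X_T Y_T.
exists Y => //; suff <- : e = n by [].
(* X meets Y exactly in T, so e = dim X/(X :&: Y) = dim X/T. *)
have XYT v : subsp_cap X Y v -> T v.
  move=> [Xv [c [t [Tt vE]]]]; have c0 : forall i, c i = 0.
    apply: IyX; have -> : \sum_(i < n) c i *: y i = v - t by rewrite vE addrC addKr.
    by apply: subspB => //; apply: TX.
  by rewrite vE big1 ?addr0 // => i _; rewrite c0 scale0r.
have X_XY := (quot_dim_second_iso _ sX sY).1 XYe.2.
apply: (quot_dim_uniq divK sT _ X_T); rewrite -[e]add0n.
apply: (quot_dim_add sT (cap_subspace sX sY) _ (fun v => @proj1 _ _) X_XY).
  by move=> v Tv; split; [apply: TX|apply: TY].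
exact/quot_dim0P.
Qed.

End Components.

Theorem mainTheorem8 (K : unitRingType) (V : lmodType K) :
  division_ring K -> infinite_dim V ->
  (exists X Y : V -> Prop, inG X /\ inG Y /\ ~ gconnected X Y) /\
  (forall X Y : V -> Prop, inG X -> inG Y ->
     (gconnected X Y <->
      exists d : nat, quot_dim (subsp_sum X Y) X d /\ quot_dim (subsp_sum X Y) Y d)) /\
  (forall X Y : V -> Prop, inG X -> complement X Y -> ~ gconnected X Y) /\
  (forall X Y : V -> Prop, inG X -> inG Y ->
     (strict_sub Y X \/ strict_sub X Y) -> ~ gconnected X Y) /\
  (forall X H : V -> Prop, inG X -> subspace H -> (forall v, H v -> X v) ->
     quot_dim X H 1 -> inG H) /\
  (forall X : V -> Prop, inG X -> forall n : nat,
     exists Y : V -> Prop, inG Y /\ gconnected X Y /\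
       forall m, (m <= n)%N -> ~ walk m X Y).
Proof.
move=> divK infV; split; first exact: exists_not_gconnected.
split; first exact: gconnectedP divK infV.
split; first exact: complement_not_gconnected divK infV.
split; first exact: strict_sub_not_gconnected divK infV.
split; first by move=> X H gX sH HX XH; apply/(inG_quot_dim divK infV sH gX.1 HX XH).
move=> X gX n; have [Y gY XYn] := exists_grass_dist divK infV n.+1 gX.
exists Y; split=> //; split=> [|m mn /(walk_grass_dist divK gX.1 gY.1) [d dm XYd]].
  exact: (grass_dist_gconnected divK infV gX gY XYn).
by move: (leq_trans dm mn); rewrite (quot_dim_uniq divK gX.1 XYd.1 XYn.1) ltnn.
Qed.
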